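(* For strictly positive formulas $A,B$: (i) $A\vdash_{\mathbf{RJ}}B$ iff $\mathrm{RJ}_S[A]\Vdash B$, where $S=\ell(A)$; (ii) $A\vdash_{\mathbf{RC}}B$ iff $\mathrm{RC}_S[A]\Vdash B$, where $S=\ell(\{A,B\})$. Here $\Vdash$ means truth at the root.
   Context: Strictly positive formulas: $A::= p\mid \top\mid (A\land B)\mid \alpha A$, $\alpha\le\omega$; $\ell(X)$ is the set of modalities occurring in formulas of $X$. $\mathbf{RJ}$: $A\vdash A$; $A\vdash\top$; cut; $A\land B\vdash A$; $A\land B\vdash B$; from $A\vdash B$, $A\vdash C$ infer $A\vdash B\land C$; from $A\vdash B$ infer $\alpha A\vdash\alpha B$; $\alpha\alpha A\vdash\alpha A$; $\alpha\beta A\vdash\beta A$, $\beta\alpha A\vdash\beta A$ for $\alpha\ge\beta$; $\alpha A\land\beta B\vdash\alpha(A\land\beta B)$ for $\alpha>\beta$. $\mathbf{RC}=\mathbf{RJ}+\{\alpha A\vdash\beta A:\alpha>\beta\}$. Kripke models of signature $S$: $W$, relations $(R_\alpha)_{\alpha\in S}$, valuation, usual forcing with $x\Vdash\alpha A$ iff $\exists y(xR_\alpha y\wedge y\Vdash A)$. RJ$_S$-frame: $R_\alpha R_\beta\subseteq R_{\min(\alpha,\beta)}$ for $\alpha,\beta\in S$, and for $\alpha>\beta$ in $S$, $xR_\alpha y\wedge xR_\beta z\Rightarrow yR_\beta z$. RC$_S$-frame: RJ$_S$-frame with $R_\alpha\subseteq R_\beta$ for $\beta<\alpha$. The canonical tree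 $T[A]$: for a variable or $\top$, one node with empty relations where only that variable is true; $T[B\land C]$: disjoint union of $T[B],T[C]$ with roots identified, a variable true at the root iff true at either root; $T[\alpha B]$: $T[B]$ plus a new root $r$ (all variables false) with $rR_\alpha$(root of $T[B]$). For $S\supseteq\ell(A)$, $\mathrm{RJ}_S[A]$ (resp. $\mathrm{RC}_S[A]$) is the model on the same set and valuation as $T[A]$ whose relations are the least relations containing those of $T[A]$ (relations for $\alpha\in S\setminus\ell(A)$ starting empty) forming an RJ$_S$-frame (resp. RC$_S$-frame). *)

From Stdlib Require Import Arith.

Inductive modal : Type := MFin (n : nat) | MOmega.

Definition mle (a b : modal) : Prop :=
  match a, b with
  | MFin n, MFin m => n <= m
  | _, MOmega => True
  | MOmega, MFin _ => False
  end.

Definition mlt (a b : modal) : Prop := mle a b /\ a <> b.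

Definition mmin (a b : modal) : modal :=
  match a, b with
  | MFin n, MFin m => MFin (Nat.min n m)
  | MOmega, _ => b
  | _, MOmega => a
  end.

Inductive form : Type :=
| FVar (p : nat)
| FTop
| FAnd (A B : form)
| FDia (a : modal) (A : form).

(* occ A a : the modality a occurs in A  (a \in l(A)). *)
Fixpoint occ (A : form) (a : modal) : Prop :=
  match A with
  | FVar _ | FTop => False
  | FAnd B C => occ B a \/ occ C a
  | FDia b B => a = b \/ occ B a
  end.

(* The calculi RJ (rc = false) and RC (rc = true). *)
Inductive prov (rc : bool) : form -> form -> Prop :=
| pr_refl A : prov rc A A
| pr_top A : prov rc A FTop
| pr_cut A B C : prov rc A B -> prov rc B C -> prov rc A C
| pr_andl A B : prov rc (FAnd A B) A
| pr_andr A B : prov rc (FAnd A B) B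
| pr_andI A B C : prov rc A B -> prov rc A C -> prov rc A (FAnd B C)
| pr_mono a A B : prov rc A B -> prov rc (FDia a A) (FDia a B)
| pr_four a A : prov rc (FDia a (FDia a A)) (FDia a A)
| pr_redl a b A : mle b a -> prov rc (FDia a (FDia b A)) (FDia b A)
| pr_redr a b A : mle b a -> prov rc (FDia b (FDia a A)) (FDia b A)
| pr_poly a b A B : mlt b a ->
    prov rc (FAnd (FDia a A) (FDia b B)) (FDia a (FAnd A (FDia b B)))
| pr_mon a b A : rc = true -> mlt b a -> prov rc (FDia a A) (FDia b A).

Definition RJ_prov := prov false.
Definition RC_prov := prov true.

(* Kripke forcing for a model (W, R, V); relations indexed by all modalities,
   those outside the signature being empty. *)
Fixpoint forces {W : Type} (R : modal -> W -> W -> Prop) (V : W -> nat -> Prop)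
  (x : W) (A : form) : Prop :=
  match A with
  | FVar p => V x p
  | FTop => True
  | FAnd B C => forces R V x B /\ forces R V x C
  | FDia a B => exists y, R a x y /\ forces R V y B
  end.

(* Canonical tree T[A].  Non-root nodes: *)
Fixpoint sub (A : form) : Type :=
  match A with
  | FVar _ | FTop => Empty_set
  | FAnd B C => (sub B + sub C)%type
  | FDia _ B => option (sub B)
  end.

(* Nodes of T[A]; None is the root. *)
Definition node (A : form) : Type := option (sub A).

Definition embL (B C : form) (x : node B) : node (FAnd B C) :=
  match x with None => None | Some s => Some (inl s) end.
Definition embR (B C : form) (x : node C) : node (FAnd B C) :=
  match x with None => None | Some s => Some (inr s) end.

Fixpoint tedge (A : form) : modal -> node A -> node A -> Prop :=
  match A return modal -> node A -> node A -> Prop with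
  | FVar _ | FTop => fun _ _ _ => False
  | FAnd B C => fun a x y =>
      (exists x' y', x = embL B C x' /\ y = embL B C y' /\ tedge B a x' y') \/
      (exists x' y', x = embR B C x' /\ y = embR B C y' /\ tedge C a x' y')
  | FDia b B => fun a x y =>
      (x = None /\ y = Some None /\ a = b) \/
      (exists x' y', x = Some x' /\ y = Some y' /\ tedge B a x' y')
  end.

Fixpoint tval (A : form) : node A -> nat -> Prop :=
  match A return node A -> nat -> Prop with
  | FVar p => fun _ q => q = p
  | FTop => fun _ _ => False
  | FAnd B C => fun x q =>
      match x with
      | None => tval B None q \/ tval C None q
      | Some (inl s) => tval B (Some s) q
      | Some (inr s) => tval C (Some s) q
      end
  | FDia _ B => fun x q =>
      match x with
      | None => False
      | Some y => tval B y q
      end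
  end.

Inductive RJrel (S : modal -> Prop) (A : form) : modal -> node A -> node A -> Prop :=
| rj_base a x y : tedge A a x y -> RJrel S A a x y
| rj_comp a b x y z : S a -> S b ->
    RJrel S A a x y -> RJrel S A b y z -> RJrel S A (mmin a b) x z
| rj_eucl a b x y z : S a -> S b -> mlt b a ->
    RJrel S A a x y -> RJrel S A b x z -> RJrel S A b y z.

Inductive RCrel (S : modal -> Prop) (A : form) : modal -> node A -> node A -> Prop :=
| rc_base a x y : tedge A a x y -> RCrel S A a x y
| rc_comp a b x y z : S a -> S b ->
    RCrel S A a x y -> RCrel S A b y z -> RCrel S A (mmin a b) x z
| rc_eucl a b x y z : S a -> S b -> mlt b a ->
    RCrel S A a x y -> RCrel S A b x z -> RCrel S A b y z
| rc_mon a b x y : S a -> S b -> mlt b a ->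
    RCrel S A a x y -> RCrel S A b x y.

Definition RJ_model_root_forces (S : modal -> Prop) (A B : form) : Prop :=
  @forces (node A) (RJrel S A) (tval A) None B.
Definition RC_model_root_forces (S : modal -> Prop) (A B : form) : Prop :=
  @forces (node A) (RCrel S A) (tval A) None B.

From Stdlib Require Import Arith Lia List Classical.
Import ListNotations.

(* Every derivation is sound for frames on the full signature
   (transitivity-like composition, the polygon/euclidean condition and, for
   RC, monotonicity).  RJ_S[A] with S = l(A) is such a frame because its
   relations outside S are empty.  RC_S[A] is only monotone inside S, so we
   first complete it to a full RC-frame: a modality g outside S gets the least
   transitive euclidean relation containing every R_t with t in S, t > g.  The
   completion agrees with RC_S[A] on S, and S = l(A, B) contains every
   modality of B, so B keeps its truth value at the root.

   Label every node of T[A] by a deductively closed theory,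
   the root by the theory of A and each a-successor by the theory generated by
   the subformula there together with the <b>-formulas (b < a) of its parent.
   The "canonical" relation between labels is a frame containing the edges of
   T[A], hence contains the least such frame RJ_S[A] (resp. RC_S[A]); the
   truth lemma then turns truth of B at the root into A |- B. *)

Lemma modal_eq_dec (a b : modal) : {a = b} + {a <> b}.
Proof. decide equality; apply Nat.eq_dec. Qed.

Lemma mle_refl a : mle a a.
Proof. destruct a; simpl; auto. Qed.

Lemma mle_trans a b c : mle a b -> mle b c -> mle a c.
Proof. destruct a, b, c; simpl; intros; auto; try lia; contradiction. Qed.

Lemma mle_total a b : mle a b \/ mle b a.
Proof. destruct a, b; simpl; auto; lia. Qed.

Lemma mle_antisym a b : mle a b -> mle b a -> a = b.
Proof. destruct a, b; simpl; intros; try contradiction; auto; f_equal; lia. Qed.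

Lemma mmin_l a b : mle b a -> mmin a b = b.
Proof. destruct a, b; simpl; intros; try contradiction; auto; f_equal; lia. Qed.

Lemma mmin_r a b : mle a b -> mmin a b = a.
Proof. destruct a, b; simpl; intros; try contradiction; auto; f_equal; lia. Qed.

Lemma mmin_id a : mmin a a = a.
Proof. apply mmin_r, mle_refl. Qed.

(* The minimum is one of its arguments, so it stays inside any signature. *)
Lemma mmin_cases a b : mmin a b = a \/ mmin a b = b.
Proof. destruct (mle_total a b); [left; apply mmin_r | right; apply mmin_l]; auto. Qed.

Lemma mmin_lb1 a b : mle (mmin a b) a.
Proof.
  destruct (mle_total a b) as [H|H];
    [rewrite mmin_r by exact H; apply mle_refl | rewrite mmin_l by exact H; exact H].
Qed.

Lemma mmin_lb2 a b : mle (mmin a b) b.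
Proof.
  destruct (mle_total a b) as [H|H];
    [rewrite mmin_r by exact H; exact H | rewrite mmin_l by exact H; apply mle_refl].
Qed.

Lemma mlt_le a b : mlt a b -> mle a b.
Proof. intros [H _]; exact H. Qed.

Lemma mlt_le_trans a b c : mlt a b -> mle b c -> mlt a c.
Proof.
  intros [H1 H2] H3; split; [eapply mle_trans; eauto|].
  intros ->; apply H2, mle_antisym; auto.
Qed.

Lemma mlt_trans a b c : mlt a b -> mlt b c -> mlt a c.
Proof. intros H1 H2; eapply mlt_le_trans; [exact H1 | apply mlt_le, H2]. Qed.

Lemma mlt_or_ge a b : mlt a b \/ mle b a.
Proof.
  destruct (mle_total b a) as [H|H]; [right; exact H|].
  destruct (modal_eq_dec a b) as [->|Hn]; [right; apply mle_refl | left; split; auto].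
Qed.

Lemma mlt_trich a b : mlt a b \/ a = b \/ mlt b a.
Proof.
  destruct (mlt_or_ge a b) as [H|H]; auto.
  destruct (modal_eq_dec a b) as [E|E]; auto. right; right; split; auto.
Qed.

(** * Frames and soundness *)

(* A frame on the full signature: RJ-frames for rc = false, RC-frames for
   rc = true. *)
Record frame {W : Type} (rc : bool) (R : modal -> W -> W -> Prop) : Prop := {
  frame_comp : forall a b x y z, R a x y -> R b y z -> R (mmin a b) x z;
  frame_eucl : forall a b x y z, mlt b a -> R a x y -> R b x z -> R b y z;
  frame_mon : rc = true -> forall a b x y, mlt b a -> R a x y -> R b x y }.

Lemma sound {W} rc (R : modal -> W -> W -> Prop) (V : W -> nat -> Prop) :
  frame rc R -> forall A B, prov rc A B -> forall x, forces R V x A -> forces R V x B.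
Proof.
  intros [Hcomp Heucl Hmon] A B HAB.
  induction HAB; simpl; intros x0 Hx; try tauto; eauto.
  - destruct Hx as [y [Hy Hf]]; exists y; auto.
  - destruct Hx as [y [Hy [z [Hz Hf]]]]; exists z; split; auto.
    rewrite <- (mmin_id a); eauto.
  - destruct Hx as [y [Hy [z [Hz Hf]]]]; exists z; split; auto.
    rewrite <- (mmin_l a b H); eauto.
  - destruct Hx as [y [Hy [z [Hz Hf]]]]; exists z; split; auto.
    rewrite <- (mmin_r b a H); eauto.
  - destruct Hx as [[y [Hy HA]] [z [Hz HB]]]; exists y; split; auto.
    split; auto; exists z; split; eauto.
  - destruct Hx as [y [Hy Hf]]; exists y; eauto.
Qed.

Lemma forces_hom {W W'} (R : modal -> W -> W -> Prop) (V : W -> nat -> Prop)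
  (R' : modal -> W' -> W' -> Prop) (V' : W' -> nat -> Prop) (f : W -> W') :
  (forall x q, V x q -> V' (f x) q) ->
  forall A, (forall a, occ A a -> forall x y, R a x y -> R' a (f x) (f y)) ->
  forall x, forces R V x A -> forces R' V' (f x) A.
Proof.
  intros HV A; induction A; simpl; intros HR x Hx; auto.
  - destruct Hx; split; [apply IHA1 | apply IHA2]; auto.
  - destruct Hx as [y [Hy Hf]]; exists (f y); split; auto.
Qed.

Lemma forces_mono {W} (R R' : modal -> W -> W -> Prop) (V : W -> nat -> Prop) A :
  (forall a, occ A a -> forall x y, R a x y -> R' a x y) ->
  forall x, forces R V x A -> forces R' V x A.
Proof. intros HR x; apply (forces_hom R V R' V (fun x => x)); auto. Qed.

Lemma tedge_occ A : forall a x y, tedge A a x y -> occ A a.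
Proof.
  induction A; simpl; intros m x y H; try contradiction.
  - destruct H as [[x' [y' [_ [_ H]]]] | [x' [y' [_ [_ H]]]]]; eauto.
  - destruct H as [[_ [_ ->]] | [x' [y' [_ [_ H]]]]]; eauto.
Qed.

Lemma tree_forces A : forces (tedge A) (tval A) None A.
Proof.
  induction A; simpl; auto.
  - split.
    + refine (forces_hom _ _ (tedge (FAnd A1 A2)) (tval (FAnd A1 A2))
                (embL A1 A2) _ A1 _ None IHA1).
      * intros [s|] q Hq; simpl; auto.
      * intros a _ x y H; left; exists x, y; auto.
    + refine (forces_hom _ _ (tedge (FAnd A1 A2)) (tval (FAnd A1 A2))
                (embR A1 A2) _ A2 _ None IHA2).
      * intros [s|] q Hq; simpl; auto.
      * intros a _ x y H; right; exists x, y; auto.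
  - exists (Some None); split; [left; auto|].
    refine (forces_hom _ _ (tedge (FDia a A)) (tval (FDia a A))
              (fun x : node A => (Some x : node (FDia a A))) _ A _ None IHA).
    + intros x q Hq; exact Hq.
    + intros b _ x y H; right; exists x, y; auto.
Qed.

Lemma RJrel_sig S A : (forall a x y, tedge A a x y -> S a) ->
  forall a x y, RJrel S A a x y -> S a.
Proof. intro HS; induction 1; eauto. destruct (mmin_cases a b) as [-> | ->]; auto. Qed.

Lemma RCrel_sig S A : (forall a x y, tedge A a x y -> S a) ->
  forall a x y, RCrel S A a x y -> S a.
Proof. intro HS; induction 1; eauto. destruct (mmin_cases a b) as [-> | ->]; auto. Qed.

Lemma RJ_model_frame A : frame false (RJrel (occ A) A).
Proof.
  pose proof (RJrel_sig (occ A) A (tedge_occ A)) as HS.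
  split.
  - intros a b x y z H1 H2; apply (rj_comp _ _ a b x y z); eauto.
  - intros a b x y z Hba H1 H2; apply (rj_eucl _ _ a b x y z); eauto.
  - discriminate.
Qed.

Lemma RJ_sound A B : RJ_prov A B -> RJ_model_root_forces (occ A) A B.
Proof.
  intro HAB. apply (sound false _ _ (RJ_model_frame A) A B HAB).
  apply (forces_mono (tedge A)); [intros; apply rj_base; auto | apply tree_forces].
Qed.

(** * Completing an RC_S-frame to a full RC-frame *)

Section Completion.

Variables (W : Type) (S : modal -> Prop) (R : modal -> W -> W -> Prop).

Hypothesis R_sig : forall a x y, R a x y -> S a.
Hypothesis R_comp : forall a b x y z, R a x y -> R b y z -> R (mmin a b) x z.
Hypothesis R_eucl : forall a b x y z, mlt b a -> R a x y -> R b x z -> R b y z.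
Hypothesis R_mon : forall a b x y, S b -> mlt b a -> R a x y -> R b x y.

Inductive above (g : modal) : W -> W -> Prop :=
| above_base t x y : S t -> mlt g t -> R t x y -> above g x y
| above_trans x y z : above g x y -> above g y z -> above g x z
| above_eucl x y z : above g x y -> above g x z -> above g y z.

Lemma above_antitone g g' x y : above g x y -> mlt g' g -> above g' x y.
Proof.
  induction 1; intros Hg.
  - eapply above_base; eauto. eapply mlt_trans; eauto.
  - eapply above_trans; eauto.
  - eapply above_eucl; eauto.
Qed.

(* Below g, inside S, an [above g]-step is an R_b-step along which R_b
   is euclidean: the invariant that makes the completion an RC-frame. *)
Lemma above_below g x y : above g x y -> forall b, S b -> mlt b g ->
  R b x y /\ (forall z, R b x z -> R b y z).
Proof.
  induction 1; intros b Sb Hb.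
  - assert (Hbt : mlt b t) by (eapply mlt_trans; eauto).
    split; [apply (R_mon t) | intros z; apply (R_eucl t)]; auto.
  - destruct (IHabove1 b Sb Hb) as [K1 E1], (IHabove2 b Sb Hb) as [K2 E2].
    split; auto. rewrite <- (mmin_id b); eauto.
  - destruct (IHabove1 b Sb Hb) as [K1 E1], (IHabove2 b Sb Hb) as [K2 E2].
    split; auto. intros w Hw. apply E2. rewrite <- (mmin_id b); eauto.
Qed.

Definition completion (a : modal) (x y : W) : Prop :=
  R a x y \/ (~ S a /\ above a x y).

Lemma completion_sig a x y : S a -> completion a x y -> R a x y.
Proof. intros Sa [H | [nSa _]]; [exact H | contradiction]. Qed.

Lemma completion_comp a b x y z :
  completion a x y -> completion b y z -> completion (mmin a b) x z.
Proof.
  intros [H1 | [nSa H1]] [H2 | [nSb H2]].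
  - left; eauto.
  - pose proof (R_sig _ _ _ H1) as Sa.
    destruct (mlt_or_ge a b) as [Hab|Hba].
    + rewrite mmin_r by (apply mlt_le; auto). left.
      rewrite <- (mmin_id a). apply (R_comp _ _ _ y); auto.
      apply (above_below b y z H2 a Sa Hab).
    + assert (Hba' : mlt b a) by (split; auto; intros ->; auto).
      rewrite mmin_l by auto. right; split; auto.
      eapply above_trans; [eapply above_base | exact H2]; eauto.
  - pose proof (R_sig _ _ _ H2) as Sb.
    destruct (mlt_or_ge b a) as [Hba|Hab].
    + rewrite mmin_l by (apply mlt_le; auto). left.
      rewrite <- (mmin_id b). apply (R_comp _ _ _ y); auto.
      apply (above_below a x y H1 b Sb Hba).
    + assert (Hab' : mlt a b) by (split; auto; intros ->; auto).
      rewrite mmin_r by auto. right; split; auto.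
      eapply above_trans; [exact H1 | eapply above_base]; eauto.
  - right. destruct (mlt_trich a b) as [Hab | [<- | Hba]].
    + rewrite mmin_r by (apply mlt_le; auto).
      split; auto. eapply above_trans; [exact H1 | eapply above_antitone; eauto].
    + rewrite mmin_id. split; auto. eapply above_trans; eauto.
    + rewrite mmin_l by (apply mlt_le; auto).
      split; auto. eapply above_trans; [eapply above_antitone; eauto | exact H2].
Qed.

Lemma completion_eucl a b x y z : mlt b a ->
  completion a x y -> completion b x z -> completion b y z.
Proof.
  intros Hba [H1 | [nSa H1]] [H2 | [nSb H2]].
  - left; eauto.
  - right; split; auto.
    eapply above_eucl; [eapply above_base; eauto | exact H2].
  - left. apply (above_below a x y H1 b (R_sig _ _ _ H2) Hba); auto.
  - right; split; auto. eapply above_eucl; [eapply above_antitone; eauto | exact H2].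
Qed.

Lemma completion_mon a b x y : mlt b a -> completion a x y -> completion b x y.
Proof.
  intros Hba H; destruct (classic (S b)) as [Sb | nSb].
  - left. destruct H as [H | [_ H]]; [eauto | apply (above_below a x y H b Sb Hba)].
  - right; split; auto. destruct H as [H | [_ H]].
    + eapply above_base; eauto.
    + eapply above_antitone; eauto.
Qed.

Lemma completion_frame : frame true completion.
Proof.
  split; [exact completion_comp | exact completion_eucl |].
  intros _; exact completion_mon.
Qed.

End Completion.

Lemma RC_sound A B :
  RC_prov A B -> RC_model_root_forces (fun a => occ A a \/ occ B a) A B.
Proof.
  intro HAB. set (S := fun a => occ A a \/ occ B a).
  assert (HS : forall a x y, RCrel S A a x y -> S a)
    by (apply RCrel_sig; intros; left; eapply tedge_occ; eauto).
  assert (Hfr : frame true (completion (node A) S (RCrel S A))).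
  { apply completion_frame; auto.
    - intros a b x y z H1 H2; apply (rc_comp _ _ a b x y z); eauto.
    - intros a b x y z Hba H1 H2; apply (rc_eucl _ _ a b x y z); eauto.
    - intros a b x y Sb Hba H; apply (rc_mon _ _ a b x y); eauto. }
  assert (HB : forces (completion (node A) S (RCrel S A)) (tval A) None B).
  { apply (sound true _ _ Hfr A B HAB).
    apply (forces_mono (tedge A)); [|apply tree_forces].
    intros a _ x y H; left; apply rc_base; auto. }
  revert HB; apply forces_mono.
  intros a Ha x y; apply completion_sig; right; exact Ha.
Qed.

(** * Canonical theories and completeness *)

Lemma RJrel_least (S : modal -> Prop) A (R : modal -> node A -> node A -> Prop) :
  frame false R -> (forall a x y, tedge A a x y -> R a x y) ->
  forall a x y, RJrel S A a x y -> R a x y.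
Proof.
  intros [Hc He _] Hb; induction 1; eauto.
Qed.

Lemma RCrel_least (S : modal -> Prop) A (R : modal -> node A -> node A -> Prop) :
  frame true R -> (forall a x y, tedge A a x y -> R a x y) ->
  forall a x y, RCrel S A a x y -> R a x y.
Proof.
  intros [Hc He Hm] Hb; induction 1; eauto.
Qed.

Section Canonical.

Variable rc : bool.

Fixpoint conj (l : list form) : form :=
  match l with [] => FTop | D :: l => FAnd D (conj l) end.

Definition generated (X : form -> Prop) (C : form) : Prop :=
  exists l, Forall X l /\ prov rc (conj l) C.

Definition theory (G : form -> Prop) : Prop :=
  G FTop /\ (forall C D, G C -> prov rc C D -> G D) /\
  (forall C D, G C -> G D -> G (FAnd C D)).

Lemma conj_app l1 l2 :
  prov rc (conj (l1 ++ l2)) (conj l1) /\ prov rc (conj (l1 ++ l2)) (conj l2).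
Proof.
  induction l1 as [|D l1 [I1 I2]]; simpl.
  - split; [apply pr_top | apply pr_refl].
  - split.
    + apply pr_andI; [apply pr_andl | eapply pr_cut; [apply pr_andr | exact I1]].
    + eapply pr_cut; [apply pr_andr | exact I2].
Qed.

Lemma generated_theory X : theory (generated X).
Proof.
  split; [|split].
  - exists []; split; [constructor | apply pr_refl].
  - intros C D [l [Hl Hp]] H; exists l; split; auto; eapply pr_cut; eauto.
  - intros C D [l1 [Hl1 Hp1]] [l2 [Hl2 Hp2]]; exists (l1 ++ l2); split.
    + apply Forall_app; auto.
    + destruct (conj_app l1 l2) as [I1 I2].
      apply pr_andI; [eapply pr_cut; [exact I1 | exact Hp1] | eapply pr_cut; [exact I2 | exact Hp2]].
Qed.

Lemma generated_incl (X : form -> Prop) C : X C -> generated X C.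
Proof. intros H; exists [C]; split; auto; apply pr_andl. Qed.

Lemma generated_single A B : generated (fun C => C = A) B -> prov rc A B.
Proof.
  intros [l [Hl Hp]]. eapply pr_cut; [|exact Hp].
  clear Hp; induction Hl as [|D l -> Hl IH]; simpl; [apply pr_top|].
  apply pr_andI; [apply pr_refl | exact IH].
Qed.

Definition canon a (G D : form -> Prop) : Prop :=
  (forall C, D C -> G (FDia a C)) /\
  (forall b w, mlt b a -> G (FDia b w) -> D (FDia b w)).

Lemma canon_comp a b G D T : theory G ->
  canon a G D -> canon b D T -> canon (mmin a b) G T.
Proof.
  intros [_ [GP _]] [D1 D2] [T1 T2]; split.
  - intros C HC. apply (GP (FDia a (FDia b C))); auto.
    destruct (mle_total a b) as [H|H].
    + rewrite mmin_r by exact H. apply pr_redr; exact H.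
    + rewrite mmin_l by exact H. apply pr_redl; exact H.
  - intros c w Hc HG. apply T2; [eapply mlt_le_trans; [exact Hc | apply mmin_lb2]|].
    apply D2; [eapply mlt_le_trans; [exact Hc | apply mmin_lb1] | exact HG].
Qed.

Lemma canon_eucl a b G D T : theory G -> mlt b a ->
  canon a G D -> canon b G T -> canon b D T.
Proof.
  intros [_ [GP _]] Hba [D1 D2] [T1 T2]; split.
  - intros C HC. apply D2; auto.
  - intros c w Hc HD. apply T2; auto.
    apply (GP (FDia a (FDia c w))); auto.
    apply pr_redl, mlt_le. eapply mlt_trans; eauto.
Qed.

Lemma canon_mon a b G D : rc = true -> theory G -> mlt b a ->
  canon a G D -> canon b G D.
Proof.
  intros Hrc [_ [GP _]] Hba [D1 D2]; split.
  - intros C HC. apply (GP (FDia a C)); auto. apply pr_mon; auto.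
  - intros c w Hc HG. apply D2; auto. eapply mlt_trans; eauto.
Qed.

Definition successor a (G : form -> Prop) B : form -> Prop :=
  generated (fun C => C = B \/ exists b w, C = FDia b w /\ mlt b a /\ G (FDia b w)).

(* The polygon axiom is what lets the <b>-formulas of G move inside <a>B. *)
Lemma canon_successor a G B : theory G -> G (FDia a B) -> canon a G (successor a G B).
Proof.
  intros HG HB. pose proof HG as [_ [GP GA]]. split.
  - intros C [l [Hl Hp]].
    assert (K : G (FDia a (FAnd B (conj l)))).
    { clear Hp. induction Hl as [|D l HD Hl IH]; simpl.
      - apply (GP _ _ HB), pr_mono, pr_andI; [apply pr_refl | apply pr_top].
      - destruct HD as [-> | [b [w [-> [Hb Hw]]]]].
        + apply (GP _ _ IH), pr_mono. apply pr_andI; [apply pr_andl | apply pr_refl].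
        + apply (GP _ _ (GA _ _ IH Hw)).
          eapply pr_cut; [apply pr_poly; exact Hb|]. apply pr_mono.
          apply pr_andI; [eapply pr_cut; [apply pr_andl | apply pr_andl]|].
          apply pr_andI; [apply pr_andr | eapply pr_cut; [apply pr_andl | apply pr_andr]]. }
    apply (GP _ _ K), pr_mono. eapply pr_cut; [apply pr_andr | exact Hp].
  - intros b w Hb Hw. apply generated_incl. right; exists b, w; auto.
Qed.

Fixpoint label (A : form) (G : form -> Prop) : node A -> form -> Prop :=
  match A return node A -> form -> Prop with
  | FVar _ | FTop => fun _ => G
  | FAnd B C => fun x =>
      match x with
      | None => G
      | Some (inl s) => label B G (Some s)
      | Some (inr s) => label C G (Some s)
      end
  | FDia a B => fun x =>
      match x with
      | None => G
      | Some y => label B (successor a G B) y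
      end
  end.

Lemma label_root A G : label A G None = G.
Proof. destruct A; reflexivity. Qed.

Lemma label_embL B C G x : label (FAnd B C) G (embL B C x) = label B G x.
Proof. destruct x; simpl; [reflexivity|]. symmetry; apply label_root. Qed.

Lemma label_embR B C G x : label (FAnd B C) G (embR B C x) = label C G x.
Proof. destruct x; simpl; [reflexivity|]. symmetry; apply label_root. Qed.

Lemma label_props A : forall G, theory G -> G A ->
  (forall x, theory (label A G x)) /\
  (forall a x y, tedge A a x y -> canon a (label A G x) (label A G y)) /\
  (forall x q, tval A x q -> label A G x (FVar q)).
Proof.
  induction A as [p| |B IHB C IHC|b B IHB]; intros G HG HA.
  - split; [|split]; simpl; auto; [intros; contradiction|]. intros x q ->; auto.
  - split; [|split]; simpl; auto; intros; contradiction.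
  - pose proof HG as [_ [GP _]].
    destruct (IHB G HG (GP _ _ HA (pr_andl _ _ _))) as [B1 [B2 B3]].
    destruct (IHC G HG (GP _ _ HA (pr_andr _ _ _))) as [C1 [C2 C3]].
    split; [|split].
    + intros [[s|s]|]; simpl; auto.
    + intros a x y [[x' [y' [-> [-> H]]]] | [x' [y' [-> [-> H]]]]].
      * rewrite !label_embL; auto.
      * rewrite !label_embR; auto.
    + intros [[s|s]|] q; simpl; auto.
      intros [H|H]; [rewrite <- (label_root B G) | rewrite <- (label_root C G)]; auto.
  - assert (HN : theory (successor b G B)) by apply generated_theory.
    assert (HNB : successor b G B B) by (apply generated_incl; left; auto).
    destruct (IHB _ HN HNB) as [B1 [B2 B3]].
    split; [|split].
    + intros [y|]; simpl; auto.
    + intros a x y [[-> [-> ->]] | [x' [y' [-> [-> H]]]]]; simpl.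
      * rewrite label_root. apply canon_successor; auto.
      * auto.
    + intros [y|] q; simpl; auto; contradiction.
Qed.

Lemma truth {W} (R : modal -> W -> W -> Prop) (V : W -> nat -> Prop)
  (T : W -> form -> Prop) (HT : forall x, theory (T x))
  (HR : forall a x y, R a x y -> canon a (T x) (T y))
  (HV : forall x q, V x q -> T x (FVar q)) :
  forall B x, forces R V x B -> T x B.
Proof.
  induction B; simpl; intros x Hx; auto.
  - apply (HT x).
  - destruct Hx; apply (HT x); auto.
  - destruct Hx as [y [Hy Hf]]. apply (HR _ _ _ Hy); auto.
Qed.

Lemma canonical_model A :
  let T := label A (generated (fun C => C = A)) in
  frame rc (fun a x y => canon a (T x) (T y)) /\
  (forall a x y, tedge A a x y -> canon a (T x) (T y)) /\
  (forall B, forces (fun a x y => canon a (T x) (T y)) (tval A) None B -> prov rc A B).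
Proof.
  intro T.
  destruct (label_props A (generated (fun C => C = A)) (generated_theory _)
              (generated_incl _ A eq_refl)) as [HT [HE HV]].
  split; [|split; [exact HE|]].
  - split.
    + intros a b x y z; apply canon_comp, HT.
    + intros a b x y z Hba; apply canon_eucl; [apply HT | exact Hba].
    + intros Hrc a b x y Hba; apply canon_mon; [exact Hrc | apply HT | exact Hba].
  - intros B HB. apply generated_single.
    rewrite <- (label_root A (generated (fun C => C = A))).
    exact (truth _ (tval A) T HT (fun a x y H => H) HV B None HB).
Qed.

End Canonical.

Lemma RJ_complete A B : RJ_model_root_forces (occ A) A B -> RJ_prov A B.
Proof.
  intro HB. destruct (canonical_model false A) as [Hfr [Hedge Hroot]].
  apply Hroot. revert HB; apply forces_mono.
  intros a _; apply (RJrel_least (occ A) A _ Hfr Hedge).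
Qed.

Lemma RC_complete S A B : RC_model_root_forces S A B -> RC_prov A B.
Proof.
  intro HB. destruct (canonical_model true A) as [Hfr [Hedge Hroot]].
  apply Hroot. revert HB; apply forces_mono.
  intros a _; apply (RCrel_least S A _ Hfr Hedge).
Qed.

Theorem theorem5p2 :
  forall A B : form,
    (RJ_prov A B <-> RJ_model_root_forces (occ A) A B) /\
    (RC_prov A B <-> RC_model_root_forces (fun a => occ A a \/ occ B a) A B).
Proof.
  intros A B; split; split.
  - apply RJ_sound.
  - apply RJ_complete.
  - apply RC_sound.
  - apply RC_complete.
Qed.
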